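(* Let $G=Z_{2^{\lambda_1}}\times\cdots\times Z_{2^{\lambda_n}}$ with $\lambda_1\le\cdots\le\lambda_n$. Then $G$ has an irregular characteristic subgroup if and only if there exist indices $i<j$ with $\lambda_j-\lambda_i\ge 2$ such that neither of the factors $Z_{2^{\lambda_i}}$ nor $Z_{2^{\lambda_j}}$ occurs repeated in this decomposition of $G$ (i.e. $\lambda_i$ and $\lambda_j$ each occur exactly once among $\lambda_1,\dots,\lambda_n$).
   Context: Tuples are ordered componentwise; for $\mathbf a$ with $\mathbf 0\le\mathbf a\le(\lambda_1,\dots,\lambda_n)$, $T(\mathbf a)$ is the set of $(g_1,\dots,g_n)\in G$ with $|g_i|=2^{a_i}$ for all $i$, and $R(\mathbf a)=\bigcup_{\mathbf b\le\mathbf a}T(\mathbf b)$. A subgroup is regular if it equals $R(\mathbf a)$ for some such $\mathbf a$, and irregular otherwise. *)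

From mathcomp Require Import all_boot all_order all_algebra all_fingroup all_solvable.
Set Implicit Arguments. Unset Strict Implicit. Unset Printing Implicit Defensive.
Import GRing.Theory FinRing.Theory.

(* The abelian 2-group G = Z_{2^lam_0} x ... x Z_{2^lam_(n-1)} is realised
   concretely inside the ambient finite abelian group
   amb = ('Z_(2^M))^n  (row vectors, group law = addition), M = max lam_i:
   the i-th coordinate of G is the unique subgroup of 'Z_(2^M) of order
   2^lam_i, i.e. the elements whose order divides 2^lam_i. *)

Definition lmax n (lam : 'I_n -> nat) : nat := \max_(i < n) lam i.

Definition amb n (lam : 'I_n -> nat) : finGroupType :=
  'rV['Z_(2 ^ lmax lam)]_n.

Definition coord n (lam : 'I_n -> nat) (g : amb lam) (i : 'I_n) : 'Z_(2 ^ lmax lam) :=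
  g ord0 i.

Definition Gset n (lam : 'I_n -> nat) : {set amb lam} :=
  [set g : amb lam | [forall i, #[coord g i]%g %| 2 ^ lam i]].

Lemma Gset_group_set n (lam : 'I_n -> nat) : group_set (Gset lam).
Proof.
apply/andP; split.
  rewrite inE; apply/forallP=> i.
  by rewrite /coord order_dvdn zmodXgE mxE mul0rn zmod1gE.
apply/subsetP=> z /imset2P[x y]; rewrite !inE => /forallP Hx /forallP Hy ->.
apply/forallP=> i; move: (Hx i) (Hy i).
rewrite /coord !order_dvdn !zmodXgE zmodMgE !zmod1gE mxE mulrnDl.
by move=> /eqP -> /eqP ->; rewrite addr0.
Qed.

Canonical Ggroup n (lam : 'I_n -> nat) : {group amb lam} :=
  Group (Gset_group_set lam).

Definition Tset n (lam : 'I_n -> nat) (a : 'I_n -> nat) : {set amb lam} :=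
  [set g in Gset lam | [forall i, #[coord g i]%g == 2 ^ a i]].

(* R(a) = union of the T(b) over 0 <= b <= a (componentwise); since
   a <= lam <= lmax lam, all such b take values in 'I_(lmax lam).+1. *)
Definition Rset n (lam : 'I_n -> nat) (a : 'I_n -> nat) : {set amb lam} :=
  \bigcup_(b : {ffun 'I_n -> 'I_(lmax lam).+1} | [forall i, (b i : nat) <= a i])
     Tset lam (fun i => b i).

Definition regular n (lam : 'I_n -> nat) (H : {set amb lam}) : Prop :=
  exists a : 'I_n -> nat, (forall i, a i <= lam i) /\ H = Rset lam a.

(* Call a level lam k single when no other index has it.  If no two single
   levels differ by 2 or more, a characteristic subgroup H contains the
   coordinate projections of its elements: the automorphisms
   g |-> g + (m g_k) e_l transfer a coordinate to an index of equal level and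
   back, and the at most two (consecutive) single levels are separated by
   comparing the orders of the two transferred coordinates.  H is then the
   product of its projections, i.e. some R(a).
   Conversely, for single levels a = lam i <= lam j - 2, the element
   2^(a-1) e_i is not in 2^a G, whereas 2^(a-1) y is for every y of exponent
   2^a whose i-th coordinate has order < 2^a; hence automorphisms keep the
   i-th coordinate of the image of e_i of order 2^a, and likewise for j.  So
   the automorphic images of x = e_i + 2^(lam j - a - 1) e_j stay in a
   subgroup that misses e_i, while every R(b) containing x contains e_i. *)

From mathcomp Require Import all_boot all_order all_algebra all_fingroup all_solvable.
From mathcomp Require Import zify.
From Stdlib Require Import Classical.
Import GRing.Theory FinRing.Theory.
Set Implicit Arguments. Unset Strict Implicit. Unset Printing Implicit Defensive.

Lemma char_injm_closed (gT : finGroupType) (G H : {group gT})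
    (f : {morphism G >-> gT}) :
  (H \char G)%g -> ('injm f)%g -> (f @* G)%g = G -> {in H, forall h, f h \in H}.
Proof.
case/charP=> sHG chH injf fG h hH.
by rewrite -(chH f injf fG) mem_morphim ?(subsetP sHG).
Qed.

Lemma gen_Aut_orbit_char (gT : finGroupType) (G : {group gT}) (x : gT) :
  x \in G -> (<<[set a x | a : {perm gT} in Aut G]>> \char G)%g.
Proof.
set X := [set _ | _ in _] => Gx.
have sXG : X \subset G by apply/subsetP=> _ /imsetP[a aA ->]; apply: Aut_closed.
apply/andP; split; first by rewrite gen_subG.
apply/forall_inP=> f fA; apply/subsetP=> _ /imsetP[y Xy ->].
have sfX : (autm fA @* <<X>> \subset <<X>>)%g.
  rewrite morphim_gen // genS //; apply/subsetP=> _ /morphimP[_ _ /imsetP[a aA ->] ->].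
  by apply/imsetP; exists (a * f)%g; rewrite ?groupM // permM.
have -> : f y = autm fA y by [].
by apply: (subsetP sfX); rewrite mem_morphim // (subsetP _ y Xy) ?gen_subG.
Qed.

Lemma cycle_order_dvdn (gT : finGroupType) (G : {group gT}) (x y : gT) :
  cyclic G -> x \in G -> y \in G -> (#[y] %| #[x])%g = (y \in <[x]>%g).
Proof.
by move=> cG Gx Gy; rewrite (cardSg_cyclic cG) ?cycle_subG.
Qed.

Section FinZmodOrder.
Variable V : finZmodType.
Implicit Types (x y : V) (m k : nat).

Lemma order_dvdn_mulrn x m : (#[x]%g %| m) = (x *+ m == 0)%R.
Proof. by rewrite order_dvdn zmodXgE. Qed.

Lemma order_mulrn_dvdn x m k : (#[(x *+ m)%R]%g %| k) = (#[x]%g %| m * k).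
Proof. by rewrite !order_dvdn_mulrn -mulrnA. Qed.

Lemma order_dvdn_addr x y m :
  #[y]%g %| m -> (#[(x + y)%R]%g %| m) = (#[x]%g %| m).
Proof. by rewrite !order_dvdn_mulrn mulrnDl => /eqP->; rewrite addr0. Qed.

Lemma order_dvdn_add x y m :
  #[x]%g %| m -> #[y]%g %| m -> #[(x + y)%R]%g %| m.
Proof. by move=> ? ?; rewrite order_dvdn_addr. Qed.

End FinZmodOrder.

Section CyclicTwoGroup.
Variable e : nat.
Hypothesis e_gt0 : 0 < e.
Local Notation Z := 'Z_(2 ^ e).
Implicit Types (x y : Z) (s t : nat).

Lemma Zp2_gt1 : 1 < 2 ^ e.
Proof. by rewrite -{1}(expn0 2) ltn_exp2l. Qed.

Lemma Zp2_cast : (Zp_trunc (2 ^ e)).+2 = 2 ^ e.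
Proof. exact: Zp_cast Zp2_gt1. Qed.

Lemma val_Zp2_add x y : (x + y)%R = (x + y) %% 2 ^ e :> nat.
Proof.
transitivity ((x + y) %% (Zp_trunc (2 ^ e)).+2); first by [].
by congr (_ %% _); exact: Zp2_cast.
Qed.

Lemma val_Zp2_mulrn x m : (x *+ m)%R = (x * m) %% 2 ^ e :> nat.
Proof. by rewrite -[x in LHS]natr_Zp -mulrnA val_Zp_nat ?Zp2_gt1. Qed.

Lemma order_Zp2_dvdnE x s : s <= e -> (#[x]%g %| 2 ^ s) = (2 ^ (e - s) %| x).
Proof.
move=> le_se; rewrite order_dvdn_mulrn -val_eqE /= val_Zp2_mulrn.
by rewrite -/(dvdn _ _) -{1}(subnK le_se) expnD dvdn_pmul2r ?expn_gt0.
Qed.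

Lemma order_Zp2 x : exists2 t, t <= e & #[x]%g = 2 ^ t.
Proof.
apply/dvdn_pfactor => //.
by have := order_dvdG (in_setT x); rewrite cardsT card_ord Zp2_cast.
Qed.

Lemma Zp2_mulrn_of_order_dvdn x y : #[y]%g %| #[x]%g -> exists m, y = (x *+ m)%R.
Proof.
have cZ : cyclic [set: Z] by rewrite Zp_cycle cycle_cyclic.
rewrite (cycle_order_dvdn cZ) ?inE // => /cycleP[m ->].
by exists m; rewrite zmodXgE.
Qed.

Lemma order_Zp2_total x y : (#[x]%g %| #[(y *+ 2)%R]%g) || (#[y]%g %| #[x]%g).
Proof.
have [t _ ->] := order_Zp2 x; have [u _ Eu] := order_Zp2 (y *+ 2)%R.
rewrite Eu dvdn_Pexp2l //; case: leqP => //= lt_ut.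
apply: (@dvdn_trans (2 ^ u.+1)); last by rewrite dvdn_Pexp2l.
by rewrite order_dvdn_mulrn expnS mulrnA -order_dvdn_mulrn Eu.
Qed.

Lemma order_Zp2_addE x y s : s < e ->
    #[x]%g %| 2 ^ s.+1 -> #[y]%g %| 2 ^ s.+1 ->
  (#[(x + y)%R]%g %| 2 ^ s) = ((#[x]%g %| 2 ^ s) == (#[y]%g %| 2 ^ s)).
Proof.
move=> lt_se; rewrite !order_Zp2_dvdnE ?(ltnW lt_se) //.
have -> : e - s = (e - s.+1).+1 by lia.
move=> /dvdnP[u Ex] /dvdnP[v Ey]; rewrite val_Zp2_add.
rewrite {1}/dvdn modn_dvdm -/(dvdn _ _); last by rewrite dvdn_exp2l; lia.
rewrite Ex Ey -mulnDl expnS !dvdn_pmul2r ?expn_gt0 // !dvdn2 oddD.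
by case: (odd u); case: (odd v).
Qed.

Lemma order_Zp2E x : #[x]%g = 2 ^ logn 2 #[x]%g.
Proof. by have [t _ ->] := order_Zp2 x; rewrite pfactorK. Qed.

Lemma order_Zp2_dvdn_exp x t : (#[x]%g %| 2 ^ t) = (logn 2 #[x]%g <= t).
Proof. by rewrite {1}order_Zp2E dvdn_Pexp2l. Qed.

Lemma order_Zp2_natr_exp t s : 0 < t <= e -> s <= e ->
  (#[((2 ^ (e - t))%:R : Z)%R]%g %| 2 ^ s) = (t <= s).
Proof.
case/andP=> t_gt0 le_te le_se.
rewrite order_Zp2_dvdnE // val_Zp_nat ?Zp2_gt1 // modn_small; last first.
  by rewrite ltn_exp2l //; lia.
by rewrite dvdn_Pexp2l //; apply/idP/idP; lia.
Qed.

Lemma Zp2_halfK x s : s < e -> #[x]%g %| 2 ^ s -> (((x %/ 2)%:R : Z) *+ 2)%R = x.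
Proof.
move=> lt_se; rewrite order_Zp2_dvdnE ?(ltnW lt_se) // => /(dvdn_trans _) ev.
rewrite -mulrnA divnK ?natr_Zp // ev // -{1}(expn1 2) dvdn_exp2l ?subn_gt0 //.
Qed.

Lemma order_Zp2_half x s : s < e -> #[x]%g %| 2 ^ s ->
  #[((x %/ 2)%:R : Z)%R]%g %| 2 ^ s.+1.
Proof.
move=> lt_se kx.
by rewrite expnS order_dvdn_mulrn mulrnA (Zp2_halfK lt_se kx) -order_dvdn_mulrn.
Qed.

End CyclicTwoGroup.

Section ProductGroup.
Variables (n : nat) (lam : 'I_n -> nat).
Hypothesis lam_gt0 : forall k, 0 < lam k.
Local Notation M := (lmax lam).
Local Notation Z := 'Z_(2 ^ lmax lam).
Local Notation A := (amb lam).
Local Notation G := (Ggroup lam).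
Implicit Types (g h : A) (z w : Z) (H : {group A}) (S : {set 'I_n}).

Lemma lam_le_lmax k : lam k <= M.
Proof. exact: (leq_bigmax (F := lam) k). Qed.

Lemma lmax_gt0 (k : 'I_n) : 0 < M.
Proof. exact: leq_trans (lam_gt0 k) (lam_le_lmax k). Qed.

Lemma mem_G g : (g \in G) = [forall k, #[g ord0 k]%g %| 2 ^ lam k].
Proof. by rewrite inE. Qed.

Lemma order_coord_G g k : g \in G -> #[g ord0 k]%g %| 2 ^ lam k.
Proof. by rewrite mem_G => /forallP. Qed.

Lemma order_coord_dvdn g k : #[g ord0 k]%g %| #[g]%g.
Proof.
by rewrite order_dvdn_mulrn -mulmxnE -zmodXgE expg_order zmod1gE mxE.
Qed.

Definition delta (l : 'I_n) z : A := (\row_j (if j == l then z else 0))%R.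

Lemma delta_expg l z m : (delta l z ^+ m)%g = delta l (z *+ m)%R.
Proof.
by apply/rowP=> j; rewrite zmodXgE mulmxnE !mxE; case: eqP; rewrite ?mul0rn.
Qed.

Lemma delta_in_G l z : (delta l z \in G) = (#[z]%g %| 2 ^ lam l).
Proof.
rewrite mem_G; apply/forallP/idP=> [/(_ l) | kz j]; rewrite mxE ?eqxx //.
by case: eqP => [-> // | _]; rewrite order_dvdn_mulrn mul0rn.
Qed.

Lemma delta_order_dvdn_in H l z w :
  delta l w \in H -> #[z]%g %| #[w]%g -> delta l z \in H.
Proof.
move=> Hw /Zp2_mulrn_of_order_dvdn[m ->].
by rewrite -delta_expg groupX.
Qed.

Definition restrict (S : {set 'I_n}) g : A :=
  (\row_j (if j \in S then g ord0 j else 0))%R.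

Lemma restrict_in H S g :
  (forall k, k \in S -> delta k (g ord0 k) \in H) -> restrict S g \in H.
Proof.
move=> SH; have -> : restrict S g = (\prod_(k in S) delta k (g ord0 k))%g.
  apply/rowP=> j; rewrite mxE.
  rewrite (big_morph (fun g : A => g ord0 j) (id1 := 0%R) (op1 := +%R)); first last.
  - by rewrite zmod1gE mxE.
  - by move=> x y; rewrite zmodMgE mxE.
  case: (boolP (j \in S)) => jS.
    rewrite (bigD1 j) //= mxE eqxx big1 ?addr0 // => i /andP[_ ij].
    by rewrite mxE eq_sym (negbTE ij).
  by rewrite big1 // => i iS; rewrite mxE; case: eqP => // ji; rewrite ji iS in jS.
exact: group_prod.
Qed.

Lemma restrictC_in H S g :
  g \in H -> restrict S g \in H -> restrict (~: S) g \in H.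
Proof.
move=> Hg HSg; suff -> : restrict (~: S) g = ((restrict S g)^-1 * g)%g.
  by rewrite groupM ?groupV.
apply/rowP=> j; rewrite zmodMgE zmodVgE !mxE inE.
by case: (j \in S); rewrite ?addNr ?oppr0 ?add0r.
Qed.

Lemma restrictT g : restrict [set: 'I_n] g = g.
Proof. by apply/rowP=> j; rewrite mxE inE. Qed.

Lemma mem_Rset (a : 'I_n -> nat) g : (forall k, a k <= lam k) ->
  (g \in Rset lam a) = [forall k, #[g ord0 k]%g %| 2 ^ a k].
Proof.
move=> le_a_lam; apply/bigcupP/forallP=> [[b /forallP le_ba] | ga].
  rewrite inE => /andP[_ /forallP gb] k.
  by rewrite (eqP (gb k)) dvdn_Pexp2l ?le_ba.
have le_ord k : logn 2 #[g ord0 k]%g <= a k.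
  by rewrite -(order_Zp2_dvdn_exp (lmax_gt0 k)).
have lt_ord k : logn 2 #[g ord0 k]%g < M.+1.
  by rewrite ltnS (leq_trans (le_ord k)) ?(leq_trans (le_a_lam k)) ?lam_le_lmax.
exists [ffun k => inord (logn 2 #[g ord0 k]%g) : 'I_M.+1].
  by apply/forallP=> k; rewrite ffunE inordK.
rewrite !inE; apply/andP; split; apply/forallP=> k; rewrite /coord.
  by rewrite (order_Zp2_dvdn_exp (lmax_gt0 k)) (leq_trans (le_ord k)).
by rewrite ffunE inordK // -(order_Zp2E (lmax_gt0 k)).
Qed.

Definition transvection k l m g : A := (g * delta l (g ord0 k *+ m)%R)%g.

Lemma transvection_morphM k l m :
  {in G &, {morph transvection k l m : g h / (g * h)%g >-> (g * h)%g}}.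
Proof.
move=> g h _ _; apply/rowP=> j; rewrite !zmodMgE !mxE.
by case: (j == l); rewrite ?mulrnDl ?addr0 // addrACA.
Qed.

Canonical transvection_morphism k l m := Morphism (transvection_morphM k l m).

Section Transvection.
Variables (k l : 'I_n) (m : nat).
Hypothesis neq_kl : k != l.
Hypothesis mulrn_kl :
  forall z, #[z]%g %| 2 ^ lam k -> #[(z *+ m)%R]%g %| 2 ^ lam l.

Lemma injm_transvection : ('injm (transvection_morphism k l m))%g.
Proof.
apply/injmP=> g h _ _ /= Egh.
have Ek : g ord0 k = h ord0 k.
  have := congr1 (fun x : A => x ord0 k) Egh.
  by rewrite /transvection /= !zmodMgE !mxE (negbTE neq_kl) !addr0.
by move: Egh; rewrite /transvection Ek => /mulIg.
Qed.

Lemma im_transvection : (transvection_morphism k l m @* G)%g = G.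
Proof.
apply/eqP; rewrite eqEcard card_injm ?injm_transvection // leqnn andbT.
apply/subsetP=> _ /morphimP[g _ Gg ->]; rewrite /= groupM // delta_in_G.
by apply/mulrn_kl/order_coord_G.
Qed.

Lemma char_delta_transfer H h :
  (H \char G)%g -> h \in H -> delta l (h ord0 k *+ m)%R \in H.
Proof.
move=> charH Hh; rewrite -(mulKg h (delta _ _)) groupM ?groupV //.
exact: (char_injm_closed charH injm_transvection im_transvection).
Qed.

End Transvection.

Definition singles : {set 'I_n} :=
  [set k | [forall l, (lam l == lam k) ==> (l == k)]].

Lemma singlesP k : reflect (forall l, lam l = lam k -> l = k) (k \in singles).
Proof.
rewrite inE; apply: (iffP forallP) => [U l /eqP E | U l].
  by apply/eqP; apply: (implyP (U l) E).
by apply/implyP=> /eqP /U ->.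
Qed.

Lemma delta_repeated_char H h k : (H \char G)%g -> h \in H ->
  k \notin singles -> delta k (h ord0 k) \in H.
Proof.
move=> charH Hh; rewrite inE negb_forall => /existsP[l].
rewrite negb_imply => /andP[/eqP Elk nlk].
have same_level u v : lam u = lam v ->
    forall z, #[z]%g %| 2 ^ lam u -> #[(z *+ 1)%R]%g %| 2 ^ lam v.
  by move=> Euv z; rewrite mulr1n Euv.
have nkl : k != l by rewrite eq_sym.
have Hl := char_delta_transfer nkl (same_level _ _ (esym Elk)) charH Hh.
have := char_delta_transfer nlk (same_level _ _ Elk) charH Hl.
by rewrite mxE eqxx !mulr1n.
Qed.

Lemma delta_pair_char H h p q : (H \char G)%g -> h \in H ->
    lam q = (lam p).+1 -> (forall r, r != p -> r != q -> h ord0 r = 0%R) ->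
  delta p (h ord0 p) \in H /\ delta q (h ord0 q) \in H.
Proof.
move=> charH Hh Epq supp_h.
have npq : p != q by apply/eqP=> Ep; rewrite Ep in Epq; lia.
have Eh : h = (delta p (h ord0 p) * delta q (h ord0 q))%g.
  apply/rowP=> j; rewrite zmodMgE !mxE.
  have [-> | njp] := eqVneq j p; first by rewrite (negbTE npq) addr0.
  by have [-> | njq] := eqVneq j q; rewrite ?add0r // supp_h ?addr0.
suff [Hp | Hq] : delta p (h ord0 p) \in H \/ delta q (h ord0 q) \in H.
- split=> //; rewrite (_ : delta q _ = (delta p (h ord0 p))^-1 * h)%g.
    by rewrite groupM ?groupV.
  by rewrite {3}Eh mulKg.
- split=> //; rewrite (_ : delta p _ = h * (delta q (h ord0 q))^-1)%g.
    by rewrite groupM ?groupV.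
  by rewrite {2}Eh mulgK.
have Hp2 : delta p (h ord0 q *+ 2)%R \in H.
  apply: char_delta_transfer charH Hh; first by rewrite eq_sym.
  by move=> z kz; rewrite order_mulrn_dvdn -expnS -Epq.
have Hq1 : delta q (h ord0 p *+ 1)%R \in H.
  apply: char_delta_transfer charH Hh => // z; rewrite mulr1n => /dvdn_trans; apply.
  by rewrite dvdn_Pexp2l // Epq.
(* Orders in 'Z_(2^M) are totally ordered, so one transferred coordinate
   generates the corresponding projection. *)
case/orP: (order_Zp2_total (lmax_gt0 p) (h ord0 p) (h ord0 q)) => ord_pq.
  by left; apply: delta_order_dvdn_in Hp2 ord_pq.
by right; apply: delta_order_dvdn_in Hq1 _; rewrite mulr1n.
Qed.

Section NoLargeGap.
Hypothesis singles_close :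
  forall u v, u \in singles -> v \in singles -> lam u <= (lam v).+1.

Lemma singles_pair k q r : k \in singles -> q \in singles -> r \in singles ->
  q != k -> (r == k) || (r == q).
Proof.
have lam_neq u v : u \in singles -> v != u -> lam v <> lam u.
  by move=> /singlesP U nvu /U Evu; rewrite Evu eqxx in nvu.
move=> Sk Sq Sr nqk; apply/norP=> [[nrk nrq]].
have := lam_neq _ _ Sk nqk; have := lam_neq _ _ Sk nrk; have := lam_neq _ _ Sq nrq.
have := singles_close Sk Sq; have := singles_close Sq Sk; have := singles_close Sk Sr.
have := singles_close Sr Sk; have := singles_close Sq Sr; have := singles_close Sr Sq.
lia.
Qed.

Lemma delta_coord_char H h k : (H \char G)%g -> h \in H -> delta k (h ord0 k) \in H.
Proof.
move=> charH Hh; have [Sk | nSk] := boolP (k \in singles); last first.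
  exact: delta_repeated_char.
set x := restrict singles h.
have Hx : x \in H.
  rewrite /x -[singles]setCK; apply: restrictC_in => //.
  by apply: restrict_in => r; rewrite inE; apply: delta_repeated_char.
have x_out r : r \notin singles -> x ord0 r = 0%R by rewrite mxE => /negbTE ->.
have <- : x ord0 k = h ord0 k by rewrite mxE Sk.
case: (pickP [pred q | (q \in singles) && (q != k)]) => [q /andP[Sq nqk] | none].
  have supp_x r : r != k -> r != q -> x ord0 r = 0%R.
    move=> nrk nrq; apply: x_out; apply/negP=> Sr.
    by have := singles_pair Sk Sq Sr nqk; rewrite (negbTE nrk) (negbTE nrq).
  have := singles_close Sk Sq; have := singles_close Sq Sk.
  case: (ltngtP (lam q) (lam k)) => [lt_qk | lt_kq | Eqk] le1 le2.
  - have Ekq : lam k = (lam q).+1 by lia.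
    by case: (delta_pair_char charH Hx Ekq) => // r nrq nrk; apply: supp_x.
  - have Eqk : lam q = (lam k).+1 by lia.
    by case: (delta_pair_char charH Hx Eqk supp_x).
  - by move/singlesP: Sk => /(_ q Eqk) Eq; rewrite Eq eqxx in nqk.
suff -> : delta k (x ord0 k) = x by [].
apply/rowP=> j; rewrite mxE; have [-> // | njk] := eqVneq j k.
have [Sj | nSj] := boolP (j \in singles); last by rewrite x_out.
by have := none j; rewrite /= Sj njk.
Qed.

Lemma char_regular H : (H \char G)%g -> regular (H : {set A}).
Proof.
move=> charH; have sHG := char_sub charH.
pose a k := \max_(h in H) logn 2 #[h ord0 k]%g.
have le_a_lam k : a k <= lam k.
  apply/bigmax_leqP=> h Hh; rewrite -(order_Zp2_dvdn_exp (lmax_gt0 k)).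
  exact/order_coord_G/(subsetP sHG).
exists a; split=> //; apply/setP=> g; rewrite mem_Rset //.
apply/idP/forallP=> [Hg k | ga].
  rewrite (order_Zp2_dvdn_exp (lmax_gt0 k)).
  exact: (leq_bigmax_cond (F := fun h : A => logn 2 #[h ord0 k]%g)).
rewrite -(restrictT g); apply: restrict_in => k _.
have [h Hh Ea] := eq_bigmax_cond (fun h : A => logn 2 #[h ord0 k]%g) (cardG_gt0 H).
apply: delta_order_dvdn_in (delta_coord_char k charH Hh) _.
by rewrite (order_Zp2E (lmax_gt0 k) (h ord0 k)) -Ea; apply: ga.
Qed.

End NoLargeGap.

(* The generator of the k-th factor, which is 2^(M - lam k) 'Z_(2^M). *)
Definition ebase k : A := delta k (2 ^ (M - lam k))%:R%R.

Lemma order_ebase_coord k s : s <= M ->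
  (#[((2 ^ (M - lam k))%:R : Z)%R]%g %| 2 ^ s) = (lam k <= s).
Proof.
by move=> le_sM; rewrite order_Zp2_natr_exp ?lam_gt0 ?lam_le_lmax ?(lmax_gt0 k).
Qed.

Lemma ebase_in_G k : ebase k \in G.
Proof. by rewrite delta_in_G order_ebase_coord ?lam_le_lmax. Qed.

Lemma order_ebase k : #[ebase k]%g %| 2 ^ lam k.
Proof.
rewrite order_dvdn delta_expg; apply/eqP/rowP=> j; rewrite zmod1gE !mxE.
case: eqP => // _; apply/eqP.
by rewrite -order_dvdn_mulrn order_ebase_coord ?lam_le_lmax.
Qed.

Lemma ebase_not_halvable k u : u \in G ->
  (u ^+ (2 ^ lam k)%N)%g != (ebase k ^+ (2 ^ (lam k).-1)%N)%g.
Proof.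
move=> Gu; apply/eqP=> /(congr1 (fun g : A => g ord0 k)).
rewrite delta_expg zmodXgE mulmxnE !mxE eqxx.
have /eqP -> : (u ord0 k *+ 2 ^ lam k == 0)%R.
  by rewrite -order_dvdn_mulrn order_coord_G.
move/esym/eqP; rewrite -order_dvdn_mulrn order_ebase_coord; last first.
  exact: leq_trans (leq_pred _) (lam_le_lmax k).
by have := lam_gt0 k; lia.
Qed.

Section SingleLevel.
Variable k : 'I_n.
Hypothesis single_k : k \in singles.

Lemma halve_single y : y \in G -> #[y]%g %| 2 ^ lam k ->
    #[y ord0 k]%g %| 2 ^ (lam k).-1 ->
  exists2 w, w \in G & (w ^+ (2 ^ lam k)%N = y ^+ (2 ^ (lam k).-1)%N)%g.
Proof.
move=> Gy ky kyk.
have ky_l l : #[y ord0 l]%g %| 2 ^ lam k := dvdn_trans (order_coord_dvdn y l) ky.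
have lt_k_M l : lam k < lam l -> lam k < M.
  by move=> lt_kl; apply: leq_trans lt_kl (lam_le_lmax l).
(* Halve the coordinates of level above lam k; the others are already killed
   by 2^((lam k).-1) because k is single. *)
pose w : A := (\row_l (if (lam k < lam l)%N then (y ord0 l %/ 2)%:R else 0))%R.
exists w.
  rewrite mem_G; apply/forallP=> l; rewrite mxE; case: ltnP => [lt_kl | _].
    apply: dvdn_trans (order_Zp2_half (lmax_gt0 l) (lt_k_M l lt_kl) (ky_l l)) _.
    by rewrite dvdn_Pexp2l.
  by rewrite order_dvdn_mulrn mul0rn.
have E2 : 2 ^ lam k = 2 * 2 ^ (lam k).-1 by rewrite -expnS prednK ?lam_gt0.
apply/rowP=> l; rewrite !zmodXgE !mulmxnE !mxE; case: ltnP => [lt_kl | le_lk].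
  by rewrite E2 mulrnA (Zp2_halfK (lmax_gt0 l) (lt_k_M l lt_kl) (ky_l l)).
rewrite mul0rn; apply/esym/eqP; rewrite -order_dvdn_mulrn.
have [-> // | nlk] := eqVneq l k.
have lt_lk : lam l < lam k.
  rewrite ltn_neqAle le_lk andbT; apply: contra nlk => /eqP Elk.
  by apply/eqP; move/singlesP: single_k; apply.
apply: dvdn_trans (order_coord_G l Gy) _.
by rewrite dvdn_exp2l // -ltnS prednK ?lam_gt0.
Qed.

Lemma aut_ebase_coord (f : {morphism G >-> A}) :
  ('injm f)%g -> (f @* G)%g = G -> ~~ (#[f (ebase k) ord0 k]%g %| 2 ^ (lam k).-1).
Proof.
move=> injf imf; apply/negP=> kfk.
have Gfe : f (ebase k) \in G by rewrite -{2}imf mem_morphim ?ebase_in_G.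
have kfe : #[f (ebase k)]%g %| 2 ^ lam k.
  exact: dvdn_trans (morph_order f (ebase_in_G k)) (order_ebase k).
have [w Gw Ew] := halve_single Gfe kfe kfk.
have /morphimP[u _ Gu Efu] : w \in (f @* G)%g by rewrite imf.
have /eqP := ebase_not_halvable k Gu; apply.
apply: (injmP injf); rewrite ?groupX ?ebase_in_G //.
by rewrite !morphX ?ebase_in_G // -Efu.
Qed.

End SingleLevel.

Section IrregularCharacteristic.
Variables i j : 'I_n.
Hypotheses (single_i : i \in singles) (single_j : j \in singles).
Hypothesis gap_ij : lam i + 2 <= lam j.

Lemma neq_ij : i != j.
Proof. by apply/eqP=> Eij; move: gap_ij; rewrite Eij; lia. Qed.

Definition witness : A := (ebase i * ebase j ^+ (2 ^ (lam j - lam i).-1)%N)%g.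

Definition coupled : {set A} := [set g in G |
  (#[g ord0 j]%g %| 2 ^ (lam i).+1) &&
  ((#[g ord0 i]%g %| 2 ^ (lam i).-1) == (#[g ord0 j]%g %| 2 ^ lam i))].

Lemma lt_lam_i_lmax : (lam i).+1 < M.
Proof. by apply: leq_trans (lam_le_lmax j); rewrite -addn2. Qed.

Lemma coupled_group_set : group_set coupled.
Proof.
apply/group_setP; split.
  by rewrite inE group1 zmod1gE !mxE !order_dvdn_mulrn !mul0rn.
move=> g h /setIdP[Gg /andP[kgj Eg]] /setIdP[Gh /andP[khj Eh]].
rewrite inE groupM //= zmodMgE !mxE order_dvdn_add //=.
have kG x : x \in G -> #[x ord0 i]%g %| 2 ^ (lam i).-1.+1.
  by rewrite prednK ?lam_gt0 //; apply: order_coord_G.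
have lt_iM : (lam i).-1 < M by apply: leq_ltn_trans (leq_pred _) (ltnW lt_lam_i_lmax).
rewrite (order_Zp2_addE (lmax_gt0 i) lt_iM (kG g Gg) (kG h Gh)).
rewrite (order_Zp2_addE (lmax_gt0 i) (ltnW lt_lam_i_lmax) kgj khj).
by move: Eg Eh; do 4!case: (_ %| 2 ^ _).
Qed.

Canonical coupled_group := Group coupled_group_set.

Lemma witness_in_G : witness \in G.
Proof. by rewrite groupM ?groupX ?ebase_in_G. Qed.

Lemma ebase_notin_coupled : ebase i \notin coupled.
Proof.
rewrite inE ebase_in_G !mxE eqxx eq_sym (negbTE neq_ij) order_ebase_coord; last first.
  exact: leq_trans (leq_pred _) (lam_le_lmax i).
rewrite !order_dvdn_mulrn !mul0rn eqxx /= eqb_id.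
by have := lam_gt0 i; lia.
Qed.

Lemma aut_witness_in_coupled (f : {morphism G >-> A}) :
  ('injm f)%g -> (f @* G)%g = G -> f witness \in coupled.
Proof.
move=> injf imf; rewrite morphM ?groupX ?ebase_in_G // morphX ?ebase_in_G //.
set y := f (ebase i); set z := f (ebase j).
have Gy : y \in G by rewrite -imf mem_morphim ?ebase_in_G.
have Gz : z \in G by rewrite -imf mem_morphim ?ebase_in_G.
have ky : #[y]%g %| 2 ^ lam i.
  exact: dvdn_trans (morph_order f (ebase_in_G i)) (order_ebase i).
have kyj : #[y ord0 j]%g %| 2 ^ lam i := dvdn_trans (order_coord_dvdn y j) ky.
rewrite inE groupM ?groupX //= zmodMgE zmodXgE !mxE !mulmxnE.
rewrite order_dvdn_add ?(dvdn_trans kyj) ?dvdn_exp2l //=; last first.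
  by rewrite order_mulrn_dvdn -expnD (_ : _ + _ = lam j) ?order_coord_G //; lia.
rewrite order_dvdn_addr; last first.
  rewrite order_mulrn_dvdn -expnD (dvdn_trans (order_coord_G i Gz)) // dvdn_exp2l //; lia.
rewrite addrC order_dvdn_addr // (negbTE (aut_ebase_coord single_i injf imf)).
rewrite order_mulrn_dvdn -expnD (_ : _ + _ = (lam j).-1); last by lia.
by rewrite (negbTE (aut_ebase_coord single_j injf imf)).
Qed.

Lemma irregular_char_exists :
  exists H : {group A}, (H \char G)%g /\ ~ regular (H : {set A}).
Proof.
set X := [set a witness | a : {perm A} in Aut G].
have sXK : <<X>>%g \subset coupled.
  rewrite gen_subG; apply/subsetP=> _ /imsetP[a Aa ->].
  have -> : a witness = autm Aa witness by rewrite autmE.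
  exact: aut_witness_in_coupled (injm_autm Aa) (im_autm Aa).
exists <<X>>%G; split; first exact: gen_Aut_orbit_char witness_in_G.
case=> c [le_c_lam EX].
have : witness \in <<X>>%g by rewrite mem_gen // -[witness]perm1 imset_f ?group1.
rewrite EX !mem_Rset // => /forallP k_witness.
have : ebase i \in <<X>>%g.
  rewrite EX mem_Rset //; apply/forallP=> k; have := k_witness k.
  rewrite /witness zmodMgE delta_expg !mxE.
  have [-> | nki] := eqVneq k i; first by rewrite (negbTE neq_ij) addr0.
  by move=> _; rewrite order_dvdn_mulrn mul0rn.
by move/(subsetP sXK); apply/negP: ebase_notin_coupled.
Qed.

End IrregularCharacteristic.
End ProductGroup.

Theorem mainTheorem12 (n : nat) (lam : 'I_n -> nat)
  (lam_pos : forall i, 0 < lam i)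
  (lam_sorted : forall i j : 'I_n, i <= j -> lam i <= lam j) :
  (exists H : {group amb lam}, (H \char Ggroup lam)%g /\ ~ regular (H : {set amb lam}))
  <->
  (exists i j : 'I_n, [/\ i < j, lam i + 2 <= lam j,
       (forall k : 'I_n, lam k = lam i -> k = i) &
       (forall k : 'I_n, lam k = lam j -> k = j)]).
Proof.
split=> [[H [charH irregH]] | [i [j [_ gap_ij Ui Uj]]]]; last first.
  by apply: (irregular_char_exists lam_pos _ _ gap_ij); apply/singlesP.
apply: NNPP => no_gap; apply: irregH; apply: (char_regular lam_pos) charH.
move=> u v /singlesP Uu /singlesP Uv; rewrite leqNgt; apply/negP=> gap_vu.
apply: no_gap; exists v, u; split=> //; last by lia.
by rewrite ltnNge; apply/negP=> /lam_sorted; lia.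
Qed.
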